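(* There exists an Opt-Lyapunov function for $(X^{\rm in},T)$ if and only if there exist a function $W:\mathbb R^d\to[0,+\infty]$ and a function $\rho:[0,+\infty]\to[0,+\infty]$ such that: (i) $\sup_{x\in X^{\rm in}}W(x)$ is finite and strictly positive; (ii) $W(T(x))\le\rho(W(x))$ for all $x\in\mathbb R^d$; (iii) $\rho(x)=0\iff x=0$ and $\rho(x)=+\infty\iff x=+\infty$; (iv) the restriction of $\rho$ to $\mathbb R_+$ belongs to $\mathcal K$; (v) $\rho(x)<x$ for all $x\in(0,+\infty)$.
   Context: $X^{\rm in}\subseteq\mathbb R^d$, $T:\mathbb R^d\to\mathbb R^d$. $\mathcal K$: continuous strictly increasing $\alpha:\mathbb R_+\to\mathbb R_+$ with $\alpha(0)=0$. An Opt-Lyapunov function for $(X^{\rm in},T)$ is a function $V:\mathbb R^d\to[0,+\infty]$ such that $\sup_{x\in X^{\rm in}}V(x)\in(0,1]$ and there exists $\lambda\in(0,1)$ with $V(T(x))\le\lambda V(x)$ for all $x\in\mathbb R^d$ (convention $\lambda\cdot(+\infty)=+\infty$). *)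

From HB Require Import structures.
From mathcomp Require Import all_boot all_order all_algebra.
From mathcomp Require Import all_classical all_reals all_analysis.
Set Implicit Arguments. Unset Strict Implicit. Unset Printing Implicit Defensive.
Import Order.TTheory GRing.Theory Num.Theory.
Import numFieldNormedType.Exports.
Local Open Scope classical_set_scope.
Local Open Scope ring_scope.

(* R^d is rendered as row vectors 'rV[R]_d; [0,+oo] as nonnegative elements of \bar R. *)

Definition classK (R : realType) (alpha : R -> R) : Prop :=
  [/\ (forall x : R, 0 <= x -> 0 <= alpha x),
      {in [set x : R | 0 <= x] &, {homo alpha : x y / x < y}},
      {within [set x : R | 0 <= x], continuous alpha} &
      alpha 0 = 0].

Local Open Scope ereal_scope.

Definition OptLyapunov (R : realType) (d : nat) (Xin : set 'rV[R]_d)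
    (T : 'rV[R]_d -> 'rV[R]_d) (V : 'rV[R]_d -> \bar R) : Prop :=
  [/\ (forall x, 0 <= V x),
      0 < ereal_sup (V @` Xin) /\ ereal_sup (V @` Xin) <= 1 &
      exists lambda : R, (0 < lambda < 1)%R /\
        forall x, V (T x) <= lambda%:E * V x].

(* If V is an Opt-Lyapunov function, rho(t) = lambda t works with W = V.
   Conversely, let m = sup W on Xin and a_n = rho^n(m) the orbit of m, which
   decreases since rho(t) < t.  The function V(x) = inf { 2^-n | W(x) <= a_n }
   (and V(x) = +oo when W(x) > m) is an Opt-Lyapunov function: W(x) <= a_n
   gives W(T x) <= rho(a_n) = a_(n+1) by monotonicity of rho, so V(T x) <= V(x)/2;
   V <= 1 on Xin, and V = 1 at any point of Xin with W(x) > rho(m). *)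

From HB Require Import structures.
From mathcomp Require Import all_boot all_order all_algebra.
From mathcomp Require Import all_classical all_reals all_analysis.
Set Implicit Arguments. Unset Strict Implicit. Unset Printing Implicit Defensive.
Import Order.TTheory GRing.Theory Num.Theory.
Import numFieldNormedType.Exports.
Local Open Scope classical_set_scope.
Local Open Scope ring_scope.
Local Open Scope ereal_scope.

Lemma classK_scale (R : realType) (l : R) : (0 < l)%R -> classK (fun r => l * r)%R.
Proof.
move=> l_gt0; split.
- by move=> x x_ge0; rewrite mulr_ge0 // ltW.
- by move=> x y _ _ xy; rewrite ltr_pM2l.
- by apply: continuous_subspaceT; exact: mulrl_continuous.
- by rewrite mulr0.
Qed.

Lemma classK_nondecreasing (R : realType) (f : R -> R) : classK f ->
  forall r s : R, (0 <= r)%R -> (r <= s)%R -> (f r <= f s)%R.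
Proof.
move=> [_ f_homo _ _] r s r_ge0; rewrite le_eqVlt => /orP[/eqP -> //|rs].
by apply/ltW/f_homo => //; rewrite inE /= //; apply: le_trans (ltW rs).
Qed.

Lemma pmule_eq0_eqy (R : realType) (l : R) (t : \bar R) : (0 < l)%R ->
  (l%:E * t = 0 <-> t = 0) /\ (l%:E * t = +oo <-> t = +oo).
Proof.
move=> l_gt0; split; split=> [|->]; rewrite ?mule0 ?gt0_muley ?lte_fin //.
- by move/eqP; rewrite mule_eq0 eqe gt_eqF //= => /eqP.
- move/eqP; rewrite mule_eq_pinfty !lte_fin l_gt0 ltNge (ltW l_gt0) /=.
  by rewrite orbF => /eqP.
Qed.

Section OrbitLevel.
Variables (R : realType) (f : R -> R) (m lam : R).
Hypothesis f_ge0 : forall r : R, (0 <= r)%R -> (0 <= f r)%R.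
Hypothesis f_nondecreasing : forall r s : R, (0 <= r)%R -> (r <= s)%R -> (f r <= f s)%R.
Hypothesis f_le : forall r : R, (0 <= r)%R -> (f r <= r)%R.
Hypothesis m_ge0 : (0 <= m)%R.
Hypothesis lam_gt0 : (0 < lam)%R.

Lemma orbit_ge0 n : (0 <= iter n f m)%R.
Proof. by elim: n => [|n IH] //=; exact: f_ge0. Qed.

Lemma orbit_le_start n : (iter n f m <= m)%R.
Proof. by elim: n => [|n IH] //=; apply: le_trans IH; apply/f_le/orbit_ge0. Qed.

(* [ereal_inf set0 = +oo]: a t above the whole orbit gets level +oo. *)
Definition orbit_level (t : \bar R) : \bar R :=
  if t <= m%:E then ereal_inf [set (lam ^+ n)%:E | n in [set n | t <= (iter n f m)%:E]]
  else +oo.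

Lemma orbit_level_ge0 t : 0 <= orbit_level t.
Proof.
rewrite /orbit_level; case: ifP => _; last exact: leey.
by apply: le_ereal_inf_tmp => _ [n _ <-]; rewrite lee_fin exprn_ge0 // ltW.
Qed.

Lemma orbit_level_le1 t : t <= m%:E -> orbit_level t <= 1.
Proof.
move=> tm; rewrite /orbit_level tm; apply: ge_ereal_inf.
by exists (lam ^+ 0)%:E; [exists 0%N | rewrite expr0].
Qed.

Lemma orbit_level_ge1 t : (f m)%:E < t -> 1 <= orbit_level t.
Proof.
move=> fmt; rewrite /orbit_level; case: ifP => _; last exact: leey.
apply: le_ereal_inf_tmp => _ [[|n] /= tn <-]; first by rewrite expr0.
have := lt_le_trans fmt tn; rewrite lte_fin ltNge.
by rewrite f_nondecreasing ?orbit_ge0 ?orbit_le_start.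
Qed.

Lemma orbit_level_contract t s : 0 <= t ->
    (forall r : R, t = r%:E -> s <= (f r)%:E) ->
  orbit_level s <= lam%:E * orbit_level t.
Proof.
case: t => [r| |] // r_ge0 sf; last first.
  have -> : orbit_level +oo = +oo by rewrite /orbit_level leye_eq.
  by rewrite gt0_muley ?lte_fin // leey.
rewrite lee_fin in r_ge0; have {}sf := sf r erefl.
rewrite [orbit_level r%:E]/orbit_level; case: ifPn => [rm|_]; last first.
  by rewrite gt0_muley ?lte_fin // leey.
have s_next n : r%:E <= (iter n f m)%:E -> s <= (iter n.+1 f m)%:E.
  by rewrite lee_fin => rn; apply: le_trans sf _; rewrite lee_fin f_nondecreasing.
have sm : s <= m%:E.
  by apply: le_trans (s_next 0%N rm) _; rewrite lee_fin orbit_le_start.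
rewrite /orbit_level sm -ereal_inf_pZl //.
apply: le_ereal_inf_tmp => _ [_ [n rn <-] <-]; apply: ereal_inf_lbound.
by exists n.+1; [exact: s_next | rewrite exprS EFinM].
Qed.

End OrbitLevel.

Lemma optLyapunov_of_orbit (R : realType) (d : nat) (Xin : set 'rV[R]_d)
    (T : 'rV[R]_d -> 'rV[R]_d) (W : 'rV[R]_d -> \bar R) (f : R -> R) (m : R) :
    (forall x, 0 <= W x) -> ereal_sup (W @` Xin) = m%:E -> (0 < m)%R ->
    (f 0 = 0)%R -> (forall r : R, (0 <= r)%R -> (0 <= f r)%R) ->
    (forall r s : R, (0 <= r)%R -> (r <= s)%R -> (f r <= f s)%R) ->
    (forall r : R, (0 < r)%R -> (f r < r)%R) ->
    (forall x (r : R), W x = r%:E -> W (T x) <= (f r)%:E) ->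
  exists V, OptLyapunov Xin T V.
Proof.
move=> W_ge0 supW m_gt0 f0 f_ge0 f_nd f_lt WT.
have f_le r : (0 <= r)%R -> (f r <= r)%R.
  by rewrite le_eqVlt => /orP[/eqP <-|/f_lt/ltW //]; rewrite f0.
pose lam : R := (2^-1)%R.
have lam_gt0 : (0 < lam)%R by rewrite invr_gt0.
have Wm x : Xin x -> W x <= m%:E.
  by move=> Xx; rewrite -supW; apply: ereal_sup_ubound; exists x.
exists (fun x => orbit_level f m lam (W x)); split.
- by move=> x; exact: orbit_level_ge0.
- split; last by apply: ge_ereal_sup => _ [x Xx <-]; exact/orbit_level_le1/Wm.
  have /ereal_sup_gt [_ [x Xx <-] fmWx] : (f m)%:E < ereal_sup (W @` Xin).
    by rewrite supW lte_fin f_lt.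
  apply: (lt_le_trans lte01); apply: le_trans (ereal_sup_ubound _); last by exists x.
  exact: orbit_level_ge1 f_ge0 f_nd f_le (ltW m_gt0) _ fmWx.
- exists lam; split; first by rewrite lam_gt0 invf_lt1 // ltr1n.
  move=> x /=.
  exact (orbit_level_contract f_ge0 f_nd f_le (ltW m_gt0) lam_gt0 (W_ge0 x) (WT x)).
Qed.

Theorem mainTheorem15 (R : realType) (d : nat) (Xin : set 'rV[R]_d)
    (T : 'rV[R]_d -> 'rV[R]_d) :
  (exists V : 'rV[R]_d -> \bar R, OptLyapunov Xin T V) <->
  (exists (W : 'rV[R]_d -> \bar R) (rho : \bar R -> \bar R),
     ((forall x, 0 <= W x) /\ (forall t, 0 <= t -> 0 <= rho t)) /\
     [/\ (* (i) *) (0 < ereal_sup (W @` Xin) < +oo),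
         (* (ii) *) (forall x, W (T x) <= rho (W x)),
         (* (iii) *) (forall t, 0 <= t -> (rho t = 0 <-> t = 0) /\ (rho t = +oo <-> t = +oo)),
         (* (iv) *) (exists f : R -> R, classK f /\
                       forall r : R, (0 <= r)%R -> rho r%:E = (f r)%:E) &
         (* (v) *) (forall r : R, (0 < r)%R -> rho r%:E < r%:E)]).
Proof.
split=> [[V [V_ge0 [sup_gt0 sup_le1] [l [/andP[l_gt0 l_lt1] VT]]]]|].
  exists V, (fun t => l%:E * t); split.
    by split=> // t t_ge0; rewrite mule_ge0 // lee_fin ltW.
  split=> //.
  - by rewrite sup_gt0 (le_lt_trans sup_le1) ?ltey.
  - by move=> t _; exact: pmule_eq0_eqy.
  - by exists (fun r => l * r)%R; split; [exact: classK_scale|].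
  - by move=> r r_gt0; rewrite -EFinM lte_fin gtr_pMl.
move=> [W [rho [[W_ge0 _] [/andP[sup_gt0 sup_fin] WT _ [f [fK rho_f]] rho_lt]]]].
have [m supW] : exists m : R, ereal_sup (W @` Xin) = m%:E.
  by move: sup_gt0 sup_fin; case: ereal_sup => [r| |] // _ _; exists r.
have f_lt r : (0 < r)%R -> (f r < r)%R.
  by move=> r_gt0; rewrite -lte_fin -rho_f ?ltW // rho_lt.
apply: (optLyapunov_of_orbit W_ge0 supW _ _ _ (classK_nondecreasing fK) f_lt).
- by rewrite -lte_fin -supW.
- by case: fK.
- by case: fK.
- move=> x r Wx; have r_ge0 : (0 <= r)%R by rewrite -lee_fin -Wx.
  by rewrite -rho_f // -Wx.
Qed.
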